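(* Let $k\ge 1$, let $A_k$ be a $k$-atom and let $s$ be a seed of $A_k$. Then the tree $T_k$ is (isomorphic to) a subgraph of the path tree of $(A_k,s)$, and $T_k$ is equal to (isomorphic to) this path tree if and only if $A_k$ is isomorphic to $T_k$.
   Context: $k$-atoms are defined recursively: $K_1$ is the only $1$-atom (its vertex is its seed). A graph $H$ is a $(k+1)$-atom if its vertices can be partitioned into an independent set $I$ and a set inducing a $k$-atom $A_k$ such that each vertex of $A_k$ has exactly one neighbor in $I$ and each vertex of $I$ has at least one neighbor in $A_k$; a seed of $H$ is a seed of $A_k$ (i.e. a vertex that can serve as the initial vertex of the recursive construction). For each $k$ there is a unique $k$-atom that is a tree, denoted $T_k$ (it has $2^{k-1}$ vertices; $T_{k+1}$ is obtained from $T_k$ by attaching one new pendant vertex to each vertex). The path tree of $(G,u)$ is the rooted tree whose vertices are the paths in $G$ starting at $u$ (the root being the path of length $0$), two such paths being adjacent iff one is obtained from the other by appending one edge at its end. *)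

(* finite simple graphs as symmetric irreflexive relations. *)
From mathcomp Require Import all_boot.
Set Implicit Arguments. Unset Strict Implicit. Unset Printing Implicit Defensive.

Section Atoms.
Variable T : finType.
Variable e : rel T.

Definition independent (A : {set T}) : Prop :=
  forall x y, x \in A -> y \in A -> ~~ e x y.

Fixpoint atom_on (k : nat) (A : {set T}) (s : T) : Prop :=
  match k with
  | 0 => False
  | 1 => A = [set s]
  | S k' =>
      exists B : {set T},
        [/\ B \subset A,
            atom_on k' B s,
            independent (A :\: B),
            (forall x, x \in B -> #|[set y in A :\: B | e x y]| = 1)
          & (forall y, y \in A :\: B -> exists2 x, x \in B & e x y)]
  end.

Definition is_atom (k : nat) (s : T) : Prop := atom_on k [set: T] s.

(* Vertices of the path tree of (G, u): paths of G starting at u, as the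
   sequence of their (distinct) vertices; [:: u] is the path of length 0. *)
Definition is_path_from (u : T) (p : seq T) : bool :=
  match p with
  | [::] => false
  | v :: q => (v == u) && path e u q && uniq p
  end.
End Atoms.

Definition ptree_edge (T : eqType) (p q : seq T) : bool :=
  ((size q == (size p).+1) && (take (size p) q == p)) ||
  ((size p == (size q).+1) && (take (size q) p == q)).

(* The tree T_k on vertex set {0, ..., 2^(k-1) - 1}: T_1 = K_1, and T_(k'+1) is
   obtained from T_k' by attaching the new pendant vertex i + 2^(k'-1) to each
   vertex i < 2^(k'-1). *)
Fixpoint Tk_rel (k : nat) (i j : nat) : bool :=
  match k with
  | 0 => false
  | 1 => false
  | S k' => [|| Tk_rel k' i j,
                (i < 2 ^ (k'.-1)) && (j == i + 2 ^ (k'.-1))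
              | (j < 2 ^ (k'.-1)) && (i == j + 2 ^ (k'.-1))]
  end.

Definition Tk_vert (k : nat) := 'I_(2 ^ k.-1).
Definition Tk_edge (k : nat) : rel (Tk_vert k) := fun i j => Tk_rel k i j.

Definition subgraph_embedding (A B : Type) (PA : pred A) (eA : rel A)
  (PB : pred B) (eB : rel B) (f : A -> B) : Prop :=
  [/\ {in PA, forall x, PB (f x)},
      {in PA &, injective f}
    & {in PA &, forall x y, eA x y -> eB (f x) (f y)}].

Definition graph_iso (A B : Type) (PA : pred A) (eA : rel A)
  (PB : pred B) (eB : rel B) (f : A -> B) : Prop :=
  [/\ {in PA, forall x, PB (f x)},
      {in PA &, injective f},
      (forall y, PB y -> exists2 x, PA x & f x = y)
    & {in PA &, forall x y, eA x y = eB (f x) (f y)}].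

From mathcomp Require Import all_boot zify.
Set Implicit Arguments. Unset Strict Implicit. Unset Printing Implicit Defensive.

(* Write the (k+1)-atom A as a k-atom B plus the independent set I = A \ B, and
   let [partner x] be the unique neighbour in I of x in B.  If the paths F i
   (i < 2^(k-1)) from s in B form a copy of T_k in the path tree, then adding the
   paths F i followed by [partner (last (F i))] gives a copy of T_(k+1): each new
   path hangs off its prefix, and no two new paths are adjacent.
   Every vertex of I has a neighbour in B, so |I| <= |B| and |A| <= 2^(k-1), with
   equality iff [partner] is injective at every level.  In that case a path can
   enter I only at its last vertex, so the copy is the whole path tree, and the
   endpoint map of the copy is an isomorphism T_k ~ A.  Conversely, if the copy
   is the whole path tree, two vertices of B with a common partner y would yield
   a path leaving B through y and re-entering it, which is not in the copy; hence
   [partner] is injective and A ~ T_k. *)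

Lemma Tk_relSS k i j :
  Tk_rel k.+2 i j =
  [|| Tk_rel k.+1 i j, (i < 2 ^ k) && (j == i + 2 ^ k) | (j < 2 ^ k) && (i == j + 2 ^ k)].
Proof. by []. Qed.

Lemma Tk_rel_sym k : symmetric (Tk_rel k).
Proof.
elim: k => [|[|k] IH] // i j.
by rewrite !Tk_relSS IH orbCA orbC -orbA.
Qed.

Lemma Tk_rel_bound k i j : Tk_rel k.+1 i j -> (i < 2 ^ k) && (j < 2 ^ k).
Proof.
elim: k i j => [|k IH] i j //; rewrite Tk_relSS expnS.
by case/or3P => [/IH|/andP[? /eqP->]|/andP[? /eqP->]]; lia.
Qed.

Lemma ltn_expS_split k j :
  j < 2 ^ k.+1 -> j < 2 ^ k \/ exists2 i, i < 2 ^ k & j = i + 2 ^ k.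
Proof.
rewrite expnS => jlt; case: (ltnP j (2 ^ k)) => jk; [by left | right].
by exists (j - 2 ^ k); lia.
Qed.

Section TkGrowth.
Variables (k i j : nat).
Hypotheses (ilt : i < 2 ^ k) (jlt : j < 2 ^ k).

Lemma Tk_rel_old : Tk_rel k.+2 i j = Tk_rel k.+1 i j.
Proof. by rewrite Tk_relSS; case: Tk_rel => //=; apply/negbTE; lia. Qed.

Lemma Tk_rel_pendant : Tk_rel k.+2 i (j + 2 ^ k) = (i == j).
Proof.
rewrite Tk_relSS; have /negbTE-> : ~~ Tk_rel k.+1 i (j + 2 ^ k).
  by apply/negP => /Tk_rel_bound; lia.
by rewrite /= eqn_add2r eq_sym ilt /= ltnNge leq_addl /= orbF.
Qed.

Lemma Tk_rel_new : Tk_rel k.+2 (i + 2 ^ k) (j + 2 ^ k) = false.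
Proof.
rewrite Tk_relSS; have /negbTE-> : ~~ Tk_rel k.+1 (i + 2 ^ k) (j + 2 ^ k).
  by apply/negP => /Tk_rel_bound; lia.
by apply/negbTE; lia.
Qed.

End TkGrowth.

Lemma rcons_extP (T : eqType) (p q : seq T) :
  reflect (exists x, q = rcons p x) ((size q == (size p).+1) && (take (size p) q == p)).
Proof.
apply: (iffP andP) => [[]|[x ->]]; last by rewrite size_rcons -cats1 take_size_cat.
case: (lastP q) => [|r x] //; rewrite size_rcons eqSS => /eqP <-.
by rewrite -cats1 take_size_cat // cats1 => /eqP->; exists x.
Qed.

Lemma ptree_edgeP (T : eqType) (p q : seq T) :
  reflect ((exists x, q = rcons p x) \/ (exists x, p = rcons q x)) (ptree_edge p q).
Proof. by apply: (iffP orP) => -[] /rcons_extP; [left|right|left|right]. Qed.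

Lemma ptree_edge_sym (T : eqType) : symmetric (@ptree_edge T).
Proof. by move=> p q; rewrite /ptree_edge orbC. Qed.

Lemma graph_iso_inv (A B : finType) (eA : rel A) (eB : rel B) (f : A -> B) :
  graph_iso predT eA predT eB f -> exists g : B -> A, graph_iso predT eB predT eA g.
Proof.
case=> _ finj fsurj fedge.
have exf y : exists x, f x == y by have [x _ /eqP] := fsurj y isT; exists x.
pose g y := xchoose (exf y).
have gK : cancel g f by move=> y; apply/eqP; apply: (xchooseP (exf y)).
exists g; split=> //.
- by move=> y1 y2 _ _ /(congr1 f); rewrite !gK.
- by move=> x _; exists (f x) => //; apply: finj; rewrite ?gK.
- by move=> y1 y2 _ _; rewrite fedge ?gK.
Qed.

Lemma card_graph_iso (A B : finType) (eA : rel A) (eB : rel B) (f : A -> B) :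
  graph_iso predT eA predT eB f -> #|A| = #|B|.
Proof.
move=> /[dup] [[_ finj _ _]] /graph_iso_inv[g [_ ginj _ _]].
have finj' : injective f by move=> x y; apply: finj.
have ginj' : injective g by move=> x y; apply: ginj.
by apply/eqP; rewrite eqn_leq (leq_card f finj') (leq_card g ginj').
Qed.

Lemma equipotent_onto (D : finType) (X : eqType) (P : X -> Prop) (f F : D -> X) :
  (forall y, P y -> exists2 x, predT x & f x = y) ->
  (forall x, P (F x)) -> injective F -> forall y, P y -> exists x, F x = y.
Proof.
move=> fsurj PF Finj y Py.
have exh x : exists z, f z == F x by have [z _ /eqP] := fsurj _ (PF x); exists z.
pose h x := xchoose (exh x); have hE x : f (h x) = F x by apply/eqP; apply: (xchooseP (exh x)).
have hinj : injective h by move=> x1 x2 /(congr1 f); rewrite !hE => /Finj.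
have [z _ <-] := fsurj y Py; have /codomP[x ->] := injF_onto hinj z.
by exists x; rewrite hE.
Qed.

Section AtomPaths.
Variables (T : finType) (e : rel T) (s : T).
Hypotheses (e_sym : symmetric e) (e_irr : irreflexive e).

Lemma is_path_from_uniq p : is_path_from e s p -> uniq p.
Proof. by case: p => //= v q /andP[]. Qed.

Lemma is_path_from_last p : is_path_from e s p -> last s p \in p.
Proof. by case: p => [|v q] //= /andP[/andP[/eqP-> _] _]; apply: mem_last. Qed.

Lemma is_path_from_rcons p y :
  is_path_from e s p -> e (last s p) y -> y \notin p -> is_path_from e s (rcons p y).
Proof.
case: p => [|v q] //= /andP[/andP[/eqP-> sq] uq] ey yq.
rewrite eqxx rcons_path sq ey mem_rcons rcons_uniq.
by move: uq yq; rewrite !inE !negb_or eq_sym => /andP[-> ->] /andP[-> ->].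
Qed.

Lemma is_path_from_prefix p1 p2 :
  p1 != [::] -> is_path_from e s (p1 ++ p2) -> is_path_from e s p1.
Proof.
case: p1 => [|v p1] // _ /andP[/andP[vs]]; rewrite cat_path => /andP[sp1 _].
by rewrite cat_uniq => /andP[u1 _]; rewrite /= vs sp1.
Qed.

(* Indices are shifted: [k] refers to a (k+1)-atom on [A] and to T_(k+1), whose
   vertex i < 2^k is realised by the path [F i]. *)
Definition tree_of_paths k (A : {set T}) (F : nat -> seq T) :=
  [/\ forall i, i < 2 ^ k -> is_path_from e s (F i) && all (mem A) (F i),
      forall i j, i < 2 ^ k -> j < 2 ^ k -> F i = F j -> i = j
    & forall i j, i < 2 ^ k -> j < 2 ^ k -> Tk_rel k.+1 i j = ptree_edge (F i) (F j)].

Definition covers_paths k (A : {set T}) (F : nat -> seq T) :=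
  forall p, is_path_from e s p -> all (mem A) p -> exists2 i, i < 2 ^ k & p = F i.

Definition endpoint_iso k (A : {set T}) (F : nat -> seq T) :=
  [/\ forall x, x \in A -> exists2 i, i < 2 ^ k & last s (F i) = x,
      forall i j, i < 2 ^ k -> j < 2 ^ k -> last s (F i) = last s (F j) -> i = j
    & forall i j, i < 2 ^ k -> j < 2 ^ k ->
        e (last s (F i)) (last s (F j)) = Tk_rel k.+1 i j].

Definition atom_ext (B A : {set T}) :=
  [/\ B \subset A, independent e (A :\: B),
      forall x, x \in B -> #|[set y in A :\: B | e x y]| = 1
    & forall y, y \in A :\: B -> exists2 x, x \in B & e x y].

Lemma atom_onSS k A :
  atom_on e k.+2 A s -> exists2 B, atom_on e k.+1 B s & atom_ext B A.
Proof. by case=> B [? ? ? ? ?]; exists B. Qed.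

Section Extension.
Variables A B : {set T}.
Hypothesis extBA : atom_ext B A.
Local Notation I := (A :\: B).

Definition partner x := odflt x [pick y in I | e x y].

Lemma partner_set x : x \in B -> [set y in I | e x y] = [set partner x].
Proof.
move=> xB; have [_ _ /(_ x xB)/eqP/cards1P[z Nx] _] := extBA.
rewrite Nx /partner; case: pickP => [y Ny | /(_ z)].
  have : y \in [set y in I | e x y] by rewrite inE.
  by rewrite Nx inE => /eqP->.
by move=> zN; have := set11 z; rewrite -Nx inE zN.
Qed.

Lemma partner_in x : x \in B -> partner x \in I.
Proof. by move/partner_set/setP/(_ (partner x)); rewrite !inE eqxx => /andP[]. Qed.

Lemma partner_edge x : x \in B -> e x (partner x).
Proof. by move/partner_set/setP/(_ (partner x)); rewrite !inE eqxx => /andP[]. Qed.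

Lemma partner_unique x y : x \in B -> y \in I -> e x y -> y = partner x.
Proof.
by move=> /partner_set/setP/(_ y) + yI exy; rewrite inE yI exy in_set1 => /esym/eqP.
Qed.

Lemma I_notin_B y : y \in I -> y \notin B.
Proof. by rewrite inE => /andP[]. Qed.

Lemma I_in_A y : y \in I -> y \in A.
Proof. by rewrite inE => /andP[]. Qed.

Lemma B_in_A x : x \in B -> x \in A.
Proof. by have [/subsetP sBA _ _ _] := extBA; apply: sBA. Qed.

Lemma card_atom_ext : #|A| = #|B| + #|I|.
Proof. by have [sBA _ _ _] := extBA; rewrite -(cardsID B A) (setIidPr sBA). Qed.

Lemma I_sub_partners : I \subset partner @: B.
Proof.
apply/subsetP => y yI; have [_ _ _ /(_ y yI)[x xB exy]] := extBA.
by rewrite (partner_unique xB yI exy) imset_f.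
Qed.

Lemma card_I_le_B : #|I| <= #|B|.
Proof. exact: leq_trans (subset_leq_card I_sub_partners) (leq_imset_card _ _). Qed.

Lemma partner_inj_of_card : #|B| <= #|I| -> {in B &, injective partner}.
Proof.
move=> le_BI; apply/imset_injP; rewrite eqn_leq leq_imset_card.
exact: leq_trans le_BI (subset_leq_card I_sub_partners).
Qed.

(* With [partner] injective, each vertex of I has a single neighbour in A, so a
   path entering I cannot leave it again. *)
Lemma belast_in_B x q : {in B &, injective partner} ->
  x \in B -> path e x q -> all (mem A) q -> uniq (x :: q) -> all (mem B) (belast x q).
Proof.
move=> pinj; elim: q x => [|z q IH] x //= xB /andP[exz zq] /andP[zA qA] /andP[xq uq].
rewrite xB; case: q => [|z' q] in IH zq qA uq xq * => //.
have zB : z \in B.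
  apply: contraT => zNB; have zI : z \in I by rewrite inE zNB zA.
  move: zq qA xq => /= /andP[ezz' _] /andP[z'A _].
  have z'B : z' \in B.
    apply: contraT => z'NB; have [_ indI _ _] := extBA.
    by have := indI z z' zI; rewrite inE z'NB z'A ezz' => /(_ isT).
  have xz' : x = z'.
    by apply: pinj; rewrite // -(partner_unique xB zI exz) -(partner_unique z'B zI) // e_sym.
  by rewrite xz' !inE eqxx orbT.
exact: IH.
Qed.

Section ExtendedPaths.
Variables (k : nat) (F : nat -> seq T).
Hypothesis treeF : tree_of_paths k B F.
Local Notation N := (2 ^ k).

Lemma path_F i : i < N -> is_path_from e s (F i).
Proof. by have [+ _ _] := treeF => /[apply] /andP[]. Qed.

Lemma F_in_B i : i < N -> all (mem B) (F i).
Proof. by have [+ _ _] := treeF => /[apply] /andP[]. Qed.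

Lemma last_F_in_B i : i < N -> last s (F i) \in B.
Proof. by move=> iN; apply: (allP (F_in_B iN)); apply/is_path_from_last/path_F. Qed.

Lemma seed_in_B : s \in B.
Proof.
have N0 : 0 < N by rewrite expn_gt0.
by move: (path_F N0) (F_in_B N0); case: (F 0) => //= v q /andP[/andP[/eqP-> _] _] /andP[].
Qed.

Lemma partner_notin_F i j : i < N -> j < N -> partner (last s (F i)) \notin F j.
Proof.
move=> iN jN; apply: contra (I_notin_B (partner_in (last_F_in_B iN))).
exact: (allP (F_in_B jN)).
Qed.

Definition ext_paths i :=
  if i < N then F i else rcons (F (i - N)) (partner (last s (F (i - N)))).

Lemma ext_paths_old i : i < N -> ext_paths i = F i.
Proof. by rewrite /ext_paths => ->. Qed.

Lemma ext_paths_new i : ext_paths (i + N) = rcons (F i) (partner (last s (F i))).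
Proof. by rewrite /ext_paths ltnNge leq_addl addnK. Qed.

Lemma F_neq_ext_paths i j : i < N -> j < N -> F j != ext_paths (i + N).
Proof.
move=> iN jN; apply: contra (partner_notin_F iN jN) => /eqP->.
by rewrite ext_paths_new mem_rcons mem_head.
Qed.

Lemma ptree_edge_F_ext_paths i j :
  i < N -> j < N -> ptree_edge (F i) (ext_paths (j + N)) = (i == j).
Proof.
move=> iN jN; have [_ injF _] := treeF.
apply/ptree_edgeP/eqP => [[][x]|->]; rewrite ext_paths_new.
- by case/rcons_inj => /injF->.
- move=> Fi; have := partner_notin_F jN iN.
  by rewrite Fi mem_rcons inE mem_rcons mem_head orbT.
- by left; exists (partner (last s (F j))).
Qed.

Lemma ptree_edge_ext_paths_new i j :
  i < N -> j < N -> ptree_edge (ext_paths (i + N)) (ext_paths (j + N)) = false.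
Proof.
move=> iN jN; apply/negbTE/ptree_edgeP => -[][x]; rewrite ext_paths_new => /rcons_inj[Fext _].
  by move: (F_neq_ext_paths iN jN); rewrite Fext eqxx.
by move: (F_neq_ext_paths jN iN); rewrite Fext eqxx.
Qed.

Lemma ext_paths_tree : tree_of_paths k.+1 A ext_paths.
Proof.
have [_ injF edgeF] := treeF.
have FA i : i < N -> all (mem A) (F i).
  by move=> iN; apply: sub_all (F_in_B iN) => x /B_in_A.
split.
- move=> j /ltn_expS_split[jN|[i iN ->]]; first by rewrite ext_paths_old // path_F // FA.
  have uB := last_F_in_B iN.
  rewrite ext_paths_new all_rcons /= I_in_A ?partner_in ?FA //= andbT.
  by rewrite is_path_from_rcons ?path_F ?partner_edge ?partner_notin_F.
- move=> i j /ltn_expS_split[iN|[i' iN ->]] /ltn_expS_split[jN|[j' jN ->]].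
  + by rewrite !ext_paths_old //; apply: injF.
  + by rewrite ext_paths_old // => /eqP; rewrite (negbTE (F_neq_ext_paths jN iN)).
  + by rewrite (ext_paths_old jN) => /esym/eqP; rewrite (negbTE (F_neq_ext_paths iN jN)).
  + by rewrite !ext_paths_new => /rcons_inj[/injF->].
- move=> i j /ltn_expS_split[iN|[i' iN ->]] /ltn_expS_split[jN|[j' jN ->]].
  + by rewrite !ext_paths_old // Tk_rel_old // edgeF.
  + by rewrite ext_paths_old // Tk_rel_pendant // ptree_edge_F_ext_paths.
  + rewrite (ext_paths_old jN) ptree_edge_sym Tk_rel_sym.
    by rewrite Tk_rel_pendant // ptree_edge_F_ext_paths.
  + by rewrite Tk_rel_new // ptree_edge_ext_paths_new.
Qed.

Lemma covers_of_ext_paths :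
  covers_paths k.+1 A ext_paths -> covers_paths k B F.
Proof.
move=> coverA p pP pB; have pA : all (mem A) p by apply: sub_all pB => x /B_in_A.
have [j + Ej] := coverA p pP pA; rewrite {}Ej in pB *.
case/ltn_expS_split => [jN|[i iN Ej]]; first by exists j; rewrite ?ext_paths_old.
move: pB; rewrite Ej ext_paths_new all_rcons /= => /andP[uB _].
by case/negP: (I_notin_B (partner_in (last_F_in_B iN))).
Qed.

(* Each [ext_paths i] meets I at most in its last vertex, so a covered path
   cannot leave B and come back. *)
Lemma ext_paths_no_reentry p y x : covers_paths k.+1 A ext_paths ->
  is_path_from e s p -> all (mem B) p -> y \in I -> e (last s p) y ->
  x \in B -> x \notin p -> ~~ e y x.
Proof.
move=> coverA pP pB yI epy xB xp; apply/negP => eyx.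
have yp : y \notin p by apply: contra (I_notin_B yI); apply: (allP pB).
have pyx : is_path_from e s (rcons (rcons p y) x).
  rewrite !is_path_from_rcons ?last_rcons // mem_rcons inE negb_or xp andbT.
  by apply: contraTneq xB => ->; apply: I_notin_B.
have pyxA : all (mem A) (rcons (rcons p y) x).
  by rewrite !all_rcons /= B_in_A ?I_in_A //=; apply: sub_all pB => z /B_in_A.
have [j + Ej] := coverA _ pyx pyxA; case/ltn_expS_split => [jN|[i iN Eij]].
  move: (F_in_B jN); rewrite -ext_paths_old // -Ej !all_rcons /= => /and3P[_ yB _].
  by case/negP: (I_notin_B yI).
move: Ej; rewrite Eij ext_paths_new => /rcons_inj[_ Ex].
by case/negP: (I_notin_B (partner_in (last_F_in_B iN))); rewrite -Ex.
Qed.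

Lemma ext_paths_partner_inj : covers_paths k.+1 A ext_paths ->
  endpoint_iso k B F -> {in B &, injective partner}.
Proof.
move=> coverA [endF _ _] x1 x2 x1B x2B eq_partner; apply/eqP/contraT => x12.
have yI := partner_in x1B; have ey1 : e (partner x1) x1 by rewrite e_sym partner_edge.
have ey2 : e (partner x1) x2 by rewrite eq_partner e_sym partner_edge.
have [i iN Fx1] := endF x1 x1B; move: (path_F iN) (F_in_B iN) Fx1.
case: (boolP (x2 \in F i)) => [x2F|x2F] Fp FB Fx1; last first.
  have ex1y : e (last s (F i)) (partner x1) by rewrite Fx1 e_sym.
  by case/negP: (ext_paths_no_reentry coverA Fp FB yI ex1y x2B x2F).
(* Cut the path to x1 at x2: the prefix ending at x2 avoids x1. *)
move: Fp FB Fx1; case/splitPr: x2F => l1 l2; rewrite -cat_rcons => Fp FB Fx1.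
have p1 : is_path_from e s (rcons l1 x2).
  by move: Fp; apply: is_path_from_prefix; rewrite -size_eq0 size_rcons.
have p1B : all (mem B) (rcons l1 x2) by move: FB; rewrite all_cat => /andP[].
have x1l2 : x1 \in l2.
  move: Fx1; rewrite last_cat last_rcons => x1l.
  by have := mem_last x2 l2; rewrite x1l inE (negbTE x12).
have x1p1 : x1 \notin rcons l1 x2.
  by move: (is_path_from_uniq Fp); rewrite cat_uniq => /and3P[_ /hasPn/(_ x1 x1l2)].
have ex2y : e (last s (rcons l1 x2)) (partner x1) by rewrite last_rcons e_sym.
by case/negP: (ext_paths_no_reentry coverA p1 p1B yI ex2y x1B x1p1).
Qed.

Lemma ext_paths_endpoint_iso : endpoint_iso k B F -> {in B &, injective partner} ->
  endpoint_iso k.+1 A ext_paths.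
Proof.
move=> [endF injF edgeF] pinj; have [_ _ _ nbrI] := extBA.
have last_old i : i < N -> last s (ext_paths i) = last s (F i).
  by move=> iN; rewrite ext_paths_old.
have last_new i : last s (ext_paths (i + N)) = partner (last s (F i)).
  by rewrite ext_paths_new last_rcons.
have partner_F i j :
    i < N -> j < N -> partner (last s (F i)) = partner (last s (F j)) -> i = j.
  by move=> iN jN /(pinj _ _ (last_F_in_B iN) (last_F_in_B jN)); apply: injF.
have edge_old_new i j : i < N -> j < N -> e (last s (F i)) (partner (last s (F j))) = (i == j).
  move=> iN jN; apply/idP/eqP => [|->]; last exact/partner_edge/last_F_in_B.
  move/(partner_unique (last_F_in_B iN) (partner_in (last_F_in_B jN))).
  by move/esym/partner_F; apply.
have ltNS i : i < N -> i + N < 2 ^ k.+1 by rewrite expnS; lia.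
split.
- move=> x xA; case: (boolP (x \in B)) => [xB|xNB].
    by have [i iN <-] := endF x xB; exists i; rewrite ?last_old // expnS; lia.
  have xI : x \in I by rewrite inE xNB xA.
  have [x0 x0B ex0x] := nbrI x xI; have [i iN Fx0] := endF x0 x0B.
  by exists (i + N); rewrite ?ltNS // last_new Fx0 (partner_unique x0B xI ex0x).
- move=> i j /ltn_expS_split[iN|[i' iN ->]] /ltn_expS_split[jN|[j' jN ->]].
  + by rewrite !last_old //; apply: injF.
  + rewrite last_old // last_new => Fij.
    by case/negP: (I_notin_B (partner_in (last_F_in_B jN))); rewrite -Fij last_F_in_B.
  + rewrite (last_old j jN) last_new => Fij.
    by case/negP: (I_notin_B (partner_in (last_F_in_B iN))); rewrite Fij last_F_in_B.
  + by rewrite !last_new => /partner_F->.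
- move=> i j /ltn_expS_split[iN|[i' iN ->]] /ltn_expS_split[jN|[j' jN ->]].
  + by rewrite !last_old // Tk_rel_old // edgeF.
  + by rewrite last_old // last_new Tk_rel_pendant // edge_old_new.
  + by rewrite (last_old j jN) last_new e_sym Tk_rel_sym Tk_rel_pendant // edge_old_new.
  + have [_ indI _ _] := extBA.
    by rewrite !last_new Tk_rel_new //; apply/negbTE/indI; apply/partner_in/last_F_in_B.
Qed.

Lemma ext_paths_covers : covers_paths k B F -> {in B &, injective partner} ->
  covers_paths k.+1 A ext_paths.
Proof.
move=> coverB pinj p pP pA.
have old r : is_path_from e s r -> all (mem B) r -> exists2 i, i < 2 ^ k.+1 & r = ext_paths i.
  move=> rP rB; have [i iN ->] := coverB r rP rB.
  by exists i; rewrite ?ext_paths_old // expnS; lia.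
case: p pP pA => [|v q] //; case: (lastP q) => [|q' y] pP pA.
  have /andP[/andP[/eqP vs _] _] := pP; subst v.
  by apply: old => //=; rewrite andbT; apply: seed_in_B.
have /andP[/andP[/eqP vs sq] uq] := pP; subst v.
have qA : all (mem A) (rcons q' y) by case/andP: pA.
have := belast_in_B pinj seed_in_B sq qA uq; rewrite belast_rcons => q'B.
move: sq; rewrite rcons_path => /andP[sq' ey].
case: (boolP (y \in B)) => [yB|yNB].
  by apply: old; rewrite // -rcons_cons all_rcons /= yB.
have yI : y \in I by rewrite inE yNB; move: qA; rewrite all_rcons => /andP[].
have pq' : is_path_from e s (s :: q').
  by rewrite /= eqxx sq'; move: uq; rewrite -rcons_cons rcons_uniq => /andP[].
have [i iN Fi] := coverB _ pq' q'B.
exists (i + N); first by rewrite expnS; lia.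
rewrite ext_paths_new -Fi /= -(partner_unique _ yI ey) //.
by apply: (allP q'B); apply: mem_last.
Qed.

End ExtendedPaths.
End Extension.

Lemma atom_card_le k A : atom_on e k.+1 A s -> #|A| <= 2 ^ k.
Proof.
elim: k A => [|k IH] A; first by move=> /= ->; rewrite cards1.
case/atom_onSS => B /IH cardB extBA.
by rewrite (card_atom_ext extBA) expnS; have := card_I_le_B extBA; lia.
Qed.

Lemma atom_paths k A : atom_on e k.+1 A s ->
  exists F, [/\ tree_of_paths k A F, covers_paths k A F -> endpoint_iso k A F
              & #|A| = 2 ^ k -> covers_paths k A F].
Proof.
elim: k A => [|k IH] A.
  move=> /= ->; exists (fun=> [:: s]).
  have cover1 : covers_paths 0 [set s] (fun=> [:: s]).
    move=> [|v [|x q]] //= /andP[/andP[/eqP-> _]]; first by exists 0.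
    rewrite !inE negb_or => /andP[/andP[/negP sx _] _] /and3P[_ /eqP xs _].
    by rewrite xs eqxx in sx.
  have lt1 i : i < 2 ^ 0 -> i = 0 by rewrite expn0 ltnS leqn0 => /eqP.
  split=> [|_|_] //.
  - split=> [i _|i j /lt1-> /lt1->|i j /lt1-> /lt1->] //.
    by rewrite /= eqxx in_set1 eqxx.
  - split=> [x /set1P->|i j /lt1-> /lt1->|i j /lt1-> /lt1->]; [by exists 0 | by [] |].
    exact: e_irr.
case/atom_onSS => B atB extBA; have [F [treeF isoF coverF]] := IH B atB.
exists (ext_paths A B k F); split; first exact: ext_paths_tree.
  move=> coverA; have isoB := isoF (covers_of_ext_paths extBA treeF coverA).
  have pinj := ext_paths_partner_inj extBA treeF coverA isoB.
  exact: (ext_paths_endpoint_iso extBA treeF isoB pinj).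
move=> cardA; have cardBI := card_atom_ext extBA; rewrite cardA expnS in cardBI.
have leIB := card_I_le_B extBA; have leB := atom_card_le atB.
have cardB : #|B| = 2 ^ k by lia.
have leBI : #|B| <= #|A :\: B| by lia.
exact: (ext_paths_covers extBA treeF (coverF cardB) (partner_inj_of_card extBA leBI)).
Qed.

Lemma tree_of_paths_embedding k A F : tree_of_paths k A F ->
  subgraph_embedding predT (@Tk_edge k.+1) (is_path_from e s) (@ptree_edge T)
    (fun i : Tk_vert k.+1 => F i).
Proof.
case=> pathF injF edgeF; split.
- by move=> i _; have /andP[] := pathF i (ltn_ord i).
- by move=> i j _ _ /(injF _ _ (ltn_ord i) (ltn_ord j)) /val_inj.
- by move=> i j _ _; rewrite /Tk_edge edgeF.
Qed.

Lemma covers_ptree_iso k F : tree_of_paths k [set: T] F -> covers_paths k [set: T] F ->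
  graph_iso predT (@Tk_edge k.+1) (is_path_from e s) (@ptree_edge T)
    (fun i : Tk_vert k.+1 => F i).
Proof.
move=> /[dup] /tree_of_paths_embedding[pathF injF _] [_ _ edgeF] coverF; split=> //.
- move=> p pP; have [i iN ->] := coverF p pP (introT allP (fun x _ => in_setT x)).
  by exists (Ordinal iN).
- by move=> i j _ _; rewrite /Tk_edge edgeF.
Qed.

Lemma ptree_iso_covers k F : tree_of_paths k [set: T] F ->
  (exists f : Tk_vert k.+1 -> seq T,
     graph_iso predT (@Tk_edge k.+1) (is_path_from e s) (@ptree_edge T) f) ->
  covers_paths k [set: T] F.
Proof.
move=> /tree_of_paths_embedding[pathF injF _] [f [_ _ fsurj _]] p pP _.
have [i <-] := equipotent_onto fsurj (fun i => pathF i isT) (fun i j => injF i j isT isT) pP.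
by exists i.
Qed.

Lemma endpoint_graph_iso k F : endpoint_iso k [set: T] F ->
  graph_iso predT (@Tk_edge k.+1) predT e (fun i : Tk_vert k.+1 => last s (F i)).
Proof.
case=> endF injF edgeF; split=> //.
- by move=> i j _ _ /(injF _ _ (ltn_ord i) (ltn_ord j)) /val_inj.
- by move=> x _; have [i iN <-] := endF x (in_setT x); exists (Ordinal iN).
- by move=> i j _ _; rewrite /Tk_edge edgeF.
Qed.

End AtomPaths.

Theorem lemma1 (T : finType) (e : rel T) (k : nat) (s : T) :
  symmetric e -> irreflexive e -> 1 <= k ->
  is_atom e k s ->
  (exists f : Tk_vert k -> seq T,
     subgraph_embedding predT (@Tk_edge k) (is_path_from e s) (@ptree_edge T) f) /\
  ((exists f : Tk_vert k -> seq T,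
      graph_iso predT (@Tk_edge k) (is_path_from e s) (@ptree_edge T) f) <->
   (exists g : T -> Tk_vert k,
      graph_iso predT e predT (@Tk_edge k) g)).
Proof.
move=> e_sym e_irr; case: k => [|k] // _ /(atom_paths e_sym e_irr)[F [treeF isoF coverF]].
split; first by eexists; apply: tree_of_paths_embedding treeF.
split=> [/(ptree_iso_covers treeF)/isoF/endpoint_graph_iso isoT | [g /card_graph_iso cardT]].
  exact: graph_iso_inv isoT.
eexists; apply: covers_ptree_iso treeF (coverF _).
by rewrite cardsT cardT card_ord.
Qed.
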